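(* Let $|N\rangle=\frac{1}{\sqrt6}(-|0\rangle+2|1\rangle-|2\rangle)$ be the qutrit Norrell state. Then $$D_{\min,\mathbb{F}_{\rm STAB}}(N)=D_{\max,\mathbb{F}_{\rm STAB}}(N)=D_{s,\mathbb{F}_{\rm STAB}}(N)=\log\tfrac32.$$
   Context: $\log$ base 2. Qutrit computational basis $|0\rangle,|1\rangle,|2\rangle$; $X|j\rangle=|j+1\bmod3\rangle$, $Z|j\rangle=e^{2\pi ij/3}|j\rangle$; the Clifford group consists of unitaries mapping the (generalized) Pauli group generated by $X,Z$ to itself under conjugation up to phases. Pure single-qutrit stabilizer states are $C|0\rangle$ with $C$ Clifford, and $\mathbb{F}_{\rm STAB}$ is their convex hull. $D_{\min,\mathbb{F}}(\rho)=\inf_{\sigma\in\mathbb{F}}(-\log\mathrm{Tr}[\Pi_\rho\sigma])$; $D_{\max,\mathbb{F}}(\rho)=\inf\{\log(1+s):\frac{\rho+s\tau}{1+s}\in\mathbb{F},\tau\text{ a state}\}$; $D_{s,\mathbb{F}}(\rho)=\inf\{\log(1+s):\frac{\rho+s\tau}{1+s}\in\mathbb{F},\tau\in\mathbb{F}\}$. *)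

From HB Require Import structures.
From mathcomp Require Import all_boot all_order all_algebra.
From mathcomp Require Import complex.
From mathcomp Require Import all_classical all_reals all_analysis.
Set Implicit Arguments. Unset Strict Implicit. Unset Printing Implicit Defensive.
Import Order.TTheory GRing.Theory Num.Theory.
Local Open Scope ring_scope.
Local Open Scope complex_scope.

Section Qutrit.
Variable R : realType.
Local Notation C := R[i].
Local Notation M := 'M[C]_3.

Definition adj m n (A : 'M[C]_(m, n)) : 'M[C]_(n, m) := (map_mx conjc A)^T.

Definition omega : C := Complex (- 2^-1) (Num.sqrt 3 / 2).

Definition Xq : M := \matrix_(i < 3, j < 3) ((i == (j.+1 %% 3)%N :> nat)%:R).
Definition Zq : M := \matrix_(i < 3, j < 3) ((i == j)%:R * omega ^+ j).

Inductive pauli : M -> Prop :=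
| pauli1 : pauli 1%:M
| pauliX : pauli Xq
| pauliZ : pauli Zq
| pauliM P Q : pauli P -> pauli Q -> pauli (P *m Q).

Definition unitary (U : M) : Prop := adj U *m U = 1%:M.

Definition clifford (U : M) : Prop :=
  unitary U /\
  forall P, pauli P -> exists (c : C) (Q : M),
    `|c| = 1 /\ pauli Q /\ U *m P *m adj U = c *: Q.

Definition ket0 : 'cV[C]_3 := \col_(i < 3) ((i == 0 :> nat)%:R).

Definition proj (v : 'cV[C]_3) : M := v *m adj v.

Definition pure_stab (rho : M) : Prop :=
  exists U, clifford U /\ rho = proj (U *m ket0).

Definition F_STAB (rho : M) : Prop :=
  exists (n : nat) (p : 'I_n -> R) (rhos : 'I_n -> M),
    (forall k, 0 <= p k) /\ \sum_k p k = 1 /\ (forall k, pure_stab (rhos k)) /\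
    rho = \sum_k (p k)%:C *: rhos k.

Definition psd (A : M) : Prop :=
  adj A = A /\ forall v : 'cV[C]_3, 0 <= (adj v *m A *m v) 0 0.

Definition state (rho : M) : Prop := psd rho /\ \tr rho = 1.

Definition supp_proj (rho P : M) : Prop :=
  P *m P = P /\ adj P = P /\ (P == rho)%MS.

Definition log2 (x : R) : R := ln x / ln 2.

Definition mlog2 (t : R) : \bar R :=
  if 0 < t then (- log2 t)%:E else +oo%E.

Definition Dmin (F : M -> Prop) (rho : M) : \bar R :=
  ereal_inf [set x | exists sigma P, F sigma /\ supp_proj rho P /\
      x = mlog2 (complex.Re (\tr (P *m sigma)))].

Definition Dmax (F : M -> Prop) (rho : M) : \bar R :=
  ereal_inf [set x | exists (s : R) tau, 0 <= s /\ state tau /\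
      F ((1 + s)^-1%:C *: (rho + s%:C *: tau)) /\ x = (log2 (1 + s))%:E].

Definition Ds (F : M -> Prop) (rho : M) : \bar R :=
  ereal_inf [set x | exists (s : R) tau, 0 <= s /\ F tau /\
      F ((1 + s)^-1%:C *: (rho + s%:C *: tau)) /\ x = (log2 (1 + s))%:E].

Definition norrell_ket : 'cV[C]_3 :=
  (Num.sqrt 6)^-1%:C *: \col_(i < 3) (if i == 1 :> nat then 2 else -1).

Definition norrell : M := proj norrell_ket.

End Qutrit.

From Pilot Require Import Defs.
From HB Require Import structures.
From mathcomp Require Import all_boot all_order all_algebra.
From mathcomp Require Import complex.
From mathcomp Require Import all_classical all_reals all_analysis.
From mathcomp Require Import ring lra.
Set Implicit Arguments. Unset Strict Implicit. Unset Printing Implicit Defensive.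
Import Order.TTheory GRing.Theory Num.Theory.
Local Open Scope ring_scope.
Local Open Scope complex_scope.

(* Write |N> = v / sqrt 6 with v = (-1, 2, -1).  For every Pauli X^a Z^b other
   than the identity, |<v|X^a Z^b|v>| = 3.  As |0><0| = (1 + Z + Z^2) / 3 and a
   Clifford U conjugates Z and Z^2 to phases times non-scalar Paulis, every pure
   stabilizer state, hence every sigma in F_STAB, has
   <v|sigma|v> <= (6 + 3 + 3) / 3, i.e. <N|sigma|N> <= 2/3, with equality at
   |1><1|.  As N is its own support projector, this gives D_min; it also forces
   s >= 1/2 whenever (N + s tau) / (1 + s) is in F_STAB.  Conversely
   (N + |+><+| / 2) / (3/2) is the uniform mixture of the stabilizer states |1>
   and (|0> + w^k |1> + |2>) / sqrt 3 for k = 1, 2, so s = 1/2 is attained with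
   the stabilizer state tau = |+><+|. *)

Section Norrell.
Variable R : realType.
Local Notation C := R[i].
Local Notation M := 'M[C]_3.
Local Notation w := (omega R).
Local Notation X := (Xq R).
Local Notation Z := (Zq R).
Local Notation adj := (@Defs.adj R _ _).
Local Notation proj := (@Defs.proj R).
Local Notation ket0 := (@Defs.ket0 R).
Local Notation pure_stab := (@Defs.pure_stab R).
Local Notation F_STAB := (@Defs.F_STAB R).
Local Notation state := (@Defs.state R).
Local Notation N := (@Defs.norrell R).
Implicit Types (x y : C) (A B P Q U : M).

(** * Complex arithmetic with [omega] *)

Lemma Re_add x y : complex.Re (x + y) = complex.Re x + complex.Re y.
Proof. by case: x; case: y. Qed.
Lemma Im_add x y : complex.Im (x + y) = complex.Im x + complex.Im y.
Proof. by case: x; case: y. Qed.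
Lemma Re_mul x y :
  complex.Re (x * y) = complex.Re x * complex.Re y - complex.Im x * complex.Im y.
Proof. by case: x; case: y. Qed.
Lemma Im_mul x y :
  complex.Im (x * y) = complex.Re x * complex.Im y + complex.Im x * complex.Re y.
Proof. by case: x => a b; case: y => c d /=; ring. Qed.
Lemma Re_opp x : complex.Re (- x) = - complex.Re x.
Proof. by case: x. Qed.
Lemma Im_opp x : complex.Im (- x) = - complex.Im x.
Proof. by case: x. Qed.
Lemma Re_conj x : complex.Re x^* = complex.Re x.
Proof. by case: x. Qed.
Lemma Im_conj x : complex.Im x^* = - complex.Im x.
Proof. by case: x. Qed.
Lemma Re_nat n : complex.Re (n%:R : C) = n%:R.
Proof. by elim: n => // n IH; rewrite !mulrS Re_add IH. Qed.
Lemma Im_nat n : complex.Im (n%:R : C) = 0.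
Proof. by elim: n => // n IH; rewrite !mulrS Im_add IH addr0. Qed.
Lemma Re_omega : complex.Re w = - 2^-1.
Proof. by []. Qed.
Lemma Im_omega : complex.Im w = Num.sqrt 3 / 2.
Proof. by []. Qed.

Lemma complex_eq x y :
  complex.Re x = complex.Re y -> complex.Im x = complex.Im y -> x = y.
Proof. by case: x; case: y => /= ? ? ? ? -> ->. Qed.

Lemma Re_ge0 x : 0 <= x -> 0 <= complex.Re x.
Proof. by rewrite lecE => /andP []. Qed.

Lemma Re_le_norm x (r : R) : `|x| = r%:C -> complex.Re x <= r.
Proof.
by move=> xr; have := normc_ge_Re x; rewrite xr lecR; apply: le_trans; apply: ler_norm.
Qed.

Lemma sqrt3_exprSS n : Num.sqrt (3 : R) ^+ n.+2 = 3 * Num.sqrt 3 ^+ n.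
Proof. by rewrite 2!exprS mulrA -expr2 sqr_sqrtr ?ler0n. Qed.

(* [lra] treats the powers of [Num.sqrt 3] as independent atoms; the entries
   of products of at most four matrices over [w] have degree at most 8. *)
Ltac csolve := apply: complex_eq;
  rewrite ?(Re_nat, Im_nat, Re_add, Im_add, Re_mul, Im_mul, Re_opp, Im_opp,
            Re_conj, Im_conj, Re_omega, Im_omega) /=;
  have := sqrt3_exprSS 0; have := sqrt3_exprSS 1; have := sqrt3_exprSS 2;
  have := sqrt3_exprSS 3; have := sqrt3_exprSS 4; have := sqrt3_exprSS 5;
  have := sqrt3_exprSS 6; lra.

Lemma omega_expr3 : w ^+ 3 = 1.
Proof. by rewrite !exprS expr0 mulr1; csolve. Qed.

Lemma omega_exprS3 n : w ^+ n.+3 = w ^+ n.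
Proof. by rewrite -addn3 exprD omega_expr3 mulr1. Qed.

Lemma omega_expr_neq1 k : (0 < k < 3)%N -> w ^+ k != 1.
Proof.
have sqrt3_gt0 : 0 < Num.sqrt (3 : R) by rewrite sqrtr_gt0 ltr0n.
case: k => [|[|[|//]]] // _; apply/eqP => /(congr1 (@complex.Im R));
  rewrite ?expr1 ?expr2 ?Im_mul ?Re_omega Im_omega /=; lra.
Qed.

Lemma norm_omega : `|w| = 1.
Proof.
rewrite normc_def Re_omega Im_omega.
suff -> : (- 2^-1) ^+ 2 + (Num.sqrt 3 / 2) ^+ 2 = 1 :> R by rewrite sqrtr1.
by have := sqrt3_exprSS 0; rewrite expr0; lra.
Qed.

Lemma sum_ord3 (V : nmodType) (f : 'I_3 -> V) : \sum_(j < 3) f j = f 0 + f 1 + f 2.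
Proof.
by rewrite !big_ord_recr big_ord0 /= add0r; congr (f _ + f _ + f _); apply: val_inj.
Qed.

Lemma ord3_ind (P : 'I_3 -> Prop) : P 0 -> P 1 -> P 2 -> forall i, P i.
Proof.
by move=> P0 P1 P2 [[|[|[|//]]] lti3]; [move: P0 | move: P1 | move: P2];
  congr P; apply: val_inj.
Qed.

Ltac mxsolve :=
  first [apply/colP; elim/ord3_ind | apply/matrixP; elim/ord3_ind; elim/ord3_ind];
  rewrite !mxE; do 3 (rewrite ?sum_ord3 ?big_ord1 /= ?mxE /=);
  rewrite ?omega_exprS3 ?expr0 ?exprS ?(mul0r, mulr0, add0r, addr0, mul1r, mulr1);
  csolve.

(** * Adjoints, projectors and expectation values *)

Lemma adjM m n p (A : 'M[C]_(m, n)) (B : 'M[C]_(n, p)) : adj (A *m B) = adj B *m adj A.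
Proof. by rewrite /Defs.adj map_mxM trmx_mul. Qed.
Lemma adjZ m n x (A : 'M[C]_(m, n)) : adj (x *: A) = x^* *: adj A.
Proof. by apply/matrixP => i j; rewrite !mxE rmorphM. Qed.
Lemma adjK m n (A : 'M[C]_(m, n)) : adj (adj A) = A.
Proof. by apply/matrixP => i j; rewrite !mxE conjcK. Qed.
Lemma adj1 : adj (1%:M : M) = 1%:M.
Proof.
rewrite /Defs.adj map_scalar_mx tr_scalar_mx; congr _%:M.
by apply: complex_eq; rewrite ?Re_conj ?Im_conj //= oppr0.
Qed.

Lemma unitaryC U : unitary U -> U *m adj U = 1%:M.
Proof. exact: mulmx1C. Qed.

Lemma unitary_conj_scalar U P x : unitary U -> U *m P *m adj U = x%:M -> P = x%:M.
Proof.
move=> uU e; have -> : P = adj U *m (U *m P *m adj U) *m U.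
  by rewrite !mulmxA uU mul1mx -mulmxA uU mulmx1.
by rewrite e mul_mx_scalar -scalemxAl uU scalemx1.
Qed.

Lemma not_scalar_mx A : A 0 0 != A 1 1 -> ~~ is_scalar_mx A.
Proof. by apply: contra => /is_scalar_mxP [a ->]; rewrite !mxE. Qed.

Lemma adj_proj v : adj (proj v) = proj v.
Proof. by rewrite /Defs.proj adjM adjK. Qed.

Lemma proj_mulmx U v : proj (U *m v) = U *m proj v *m adj U.
Proof. by rewrite /Defs.proj adjM !mulmxA. Qed.

Lemma proj_scale (k : R) v : proj (k%:C *: v) = (k ^+ 2)%:C *: proj v.
Proof.
by rewrite /Defs.proj adjZ -scalemxAl -scalemxAr scalerA; congr (_ *: _); csolve.
Qed.

Lemma proj_idem v : adj v *m v = 1%:M -> proj v *m proj v = proj v.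
Proof. by move=> vv; rewrite /Defs.proj mulmxA -(mulmxA v) vv mulmx1. Qed.

Lemma supp_proj_refl rho : rho *m rho = rho -> adj rho = rho -> supp_proj rho rho.
Proof. by move=> rr arho; do 2 split=> //; rewrite !submx_refl. Qed.

Lemma supp_proj_eq rho P :
  rho *m rho = rho -> adj rho = rho -> supp_proj rho P -> P = rho.
Proof.
move=> rr arho [PP [aP /andP [/submxP [A eA] /submxP [B eB]]]].
have Prho : P *m rho = P by rewrite {1}eA -mulmxA rr -eA.
have rhoP : rho *m P = rho by rewrite {1}eB -mulmxA PP -eB.
by have := congr1 adj Prho; rewrite adjM arho aP => <-.
Qed.

Definition expect (v : 'cV[C]_3) A : C := (adj v *m A *m v) 0 0.

Lemma expectD v A B : expect v (A + B) = expect v A + expect v B.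
Proof. by rewrite /expect mulmxDr mulmxDl mxE. Qed.
Lemma expectZ v x A : expect v (x *: A) = x * expect v A.
Proof. by rewrite /expect -scalemxAr -scalemxAl mxE. Qed.
Lemma expect_sum v n (f : 'I_n -> M) : expect v (\sum_k f k) = \sum_k expect v (f k).
Proof. by apply: (big_morph _ (expectD v)); rewrite /expect mulmx0 mul0mx mxE. Qed.

Lemma expect_proj v u : expect v (proj u) = `|(adj v *m u) 0 0| ^+ 2.
Proof.
rewrite sqr_normc /expect /Defs.proj !mulmxA -mulmxA -[adj u *m v]adjK adjM adjK.
by rewrite [LHS]mxE big_ord1 !mxE.
Qed.

Lemma Re_expect_proj_ge0 v u : 0 <= complex.Re (expect v (proj u)).
Proof. by apply: Re_ge0; rewrite expect_proj exprn_ge0. Qed.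

Lemma mxtrace_proj_mul v A : \tr (proj v *m A) = expect v A.
Proof. by rewrite /Defs.proj -mulmxA mxtrace_mulC trace_mx11. Qed.

(** * Paulis, Cliffords and stabilizer states *)

Lemma Xq_expr3 : X ^+ 3 = 1.
Proof. rewrite !exprS expr0 mulr1 -!mulmxE; mxsolve. Qed.

Lemma Zq_expr3 : Z ^+ 3 = 1.
Proof. rewrite !exprS expr0 mulr1 -!mulmxE; mxsolve. Qed.

Lemma Xq_expr2 : X ^+ 2 = \matrix_(i < 3, j < 3) ((i == (j.+2 %% 3)%N :> nat)%:R).
Proof. rewrite expr2 -mulmxE; mxsolve. Qed.

Lemma Zq_expr2 : Z ^+ 2 = \matrix_(i < 3, j < 3) ((i == j)%:R * w ^+ (2 * j)).
Proof. rewrite expr2 -mulmxE; mxsolve. Qed.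

Lemma ZqXq : Z *m X = w *: (X *m Z).
Proof. mxsolve. Qed.

Lemma XqZq : X *m Z = w ^+ 2 *: (Z *m X).
Proof. mxsolve. Qed.

Lemma Zq_Xq_expr b c : Z ^+ b * X ^+ c = w ^+ (b * c) *: (X ^+ c * Z ^+ b).
Proof.
have ZX : Z * X = w *: (X * Z) := ZqXq.
have ZbX n : Z ^+ n * X = w ^+ n *: (X * Z ^+ n).
  elim: n => [|n IH]; first by rewrite !expr0 mul1r mulr1 scale1r.
  rewrite exprSr -[in LHS]mulrA ZX -scalerAr [in LHS]mulrA IH -scalerAl.
  by rewrite scalerA -exprS mulrA.
elim: c => [|c IH]; first by rewrite muln0 !expr0 mul1r mulr1 scale1r.
rewrite exprS [in LHS]mulrA ZbX -scalerAl -[in LHS]mulrA IH -scalerAr scalerA.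
by rewrite -exprD -mulnS !mulrA.
Qed.

Lemma pauli_normal_form Q : pauli Q ->
  exists x a b, [/\ `|x| = 1, (a < 3)%N, (b < 3)%N & Q = x *: (X ^+ a * Z ^+ b)].
Proof.
move=> pQ.
suff [x [a [b [x1 ->]]]] : exists x a b, `|x| = 1 /\ Q = x *: (X ^+ a * Z ^+ b).
  exists x, (a %% 3)%N, (b %% 3)%N.
  by rewrite !ltn_mod (expr_mod _ Xq_expr3) (expr_mod _ Zq_expr3).
elim: pQ.
- by exists 1, 0%N, 0%N; rewrite normr1 scale1r mulr1.
- by exists 1, 1%N, 0%N; rewrite normr1 scale1r expr1 mulr1.
- by exists 1, 0%N, 1%N; rewrite normr1 scale1r expr1 mul1r.
- move=> _ _ _ [x [a [b [x1 ->]]]] _ [y [c [d [y1 ->]]]].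
  exists (x * y * w ^+ (b * c)), (a + c)%N, (b + d)%N.
  rewrite !normrM x1 y1 normrX norm_omega expr1n !mulr1; split=> //.
  rewrite mulmxE -scalerAl -scalerAr scalerA mulrA -(mulrA (X ^+ a)) Zq_Xq_expr.
  by rewrite -scalerAr -scalerAl scalerA !exprD !mulrA.
Qed.

Lemma Zq_expr_not_scalar k : (0 < k < 3)%N -> ~~ is_scalar_mx (Z ^+ k).
Proof.
move=> k12; apply: not_scalar_mx; rewrite eq_sym.
case: k k12 => [|[|[|//]]] // k12;
  rewrite ?expr1 ?Zq_expr2 !mxE /= ?mul1r ?expr0 ?muln1; exact: omega_expr_neq1.
Qed.

Definition conj_to_pauli U P :=
  exists x Q, `|x| = 1 /\ pauli Q /\ U *m P = x *: (Q *m U).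

Lemma conj_to_pauliZ x U P : conj_to_pauli U P -> conj_to_pauli (x *: U) P.
Proof.
move=> [y [Q [y1 [pQ e]]]]; exists y, Q; do 2 split=> //.
by rewrite -scalemxAl e -scalemxAr !scalerA mulrC.
Qed.

Lemma clifford_gen U : unitary U ->
  conj_to_pauli U X -> conj_to_pauli U Z -> clifford U.
Proof.
move=> uU cX cZ; split=> // P pP.
suff [x [Q [x1 [pQ e]]]] : conj_to_pauli U P.
  by exists x, Q; rewrite e -scalemxAl -mulmxA unitaryC // mulmx1.
elim: pP => //.
- exists 1, 1%:M; rewrite normr1 mulmx1 mul1mx scale1r.
  by do 2 split=> //; exact: pauli1.
- move=> P1 P2 _ [x [Q1 [x1 [pQ1 e1]]]] _ [y [Q2 [y1 [pQ2 e2]]]].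
  exists (x * y), (Q1 *m Q2); rewrite normrM x1 y1 mulr1.
  do 2 split; first exact: pauliM.
  by rewrite mulmxA e1 -scalemxAl -mulmxA e2 -scalemxAr scalerA mulmxA.
Qed.

Lemma clifford1 : clifford (1%:M : M).
Proof.
split=> [|P pP]; first by rewrite /unitary adj1 mul1mx.
by exists 1, P; rewrite normr1 scale1r mul1mx adj1 mulmx1.
Qed.

Lemma clifford_mul U V : clifford U -> clifford V -> clifford (U *m V).
Proof.
move=> [uU cU] [uV cV]; split.
  by rewrite /unitary adjM mulmxA -(mulmxA (adj V)) uU mulmx1 uV.
move=> P /cV [x [Q [x1 [pQ e]]]]; have [y [Q' [y1 [pQ' e']]]] := cU Q pQ.
exists (x * y), Q'; rewrite normrM x1 y1 mulr1; do 2 split=> //.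
have -> : U *m V *m P *m adj (U *m V) = U *m (V *m P *m adj V) *m adj U.
  by rewrite adjM !mulmxA.
by rewrite e -scalemxAr -scalemxAl e' scalerA.
Qed.

Lemma clifford_conj_not_scalar U P : clifford U -> pauli P -> ~~ is_scalar_mx P ->
  exists x Q, [/\ `|x| = 1, pauli Q, ~~ is_scalar_mx Q & U *m P *m adj U = x *: Q].
Proof.
move=> [uU cU] pP nsP; have [x [Q [x1 [pQ e]]]] := cU P pP.
exists x, Q; split=> //; apply: contra nsP => /is_scalar_mxP [a eQ].
apply/is_scalar_mxP; exists (x * a).
by apply: unitary_conj_scalar uU _; rewrite e eQ scale_scalar_mx.
Qed.

Lemma unitary_Xq : unitary X.
Proof. rewrite /unitary /Defs.adj; mxsolve. Qed.

Lemma clifford_Xq : clifford X.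
Proof.
apply: clifford_gen unitary_Xq _ _.
- by exists 1, X; rewrite normr1 scale1r; do 2 split=> //; exact: pauliX.
- exists (w ^+ 2), Z; rewrite normrX norm_omega expr1n.
  by split=> //; split; [exact: pauliZ | exact: XqZq].
Qed.

Definition dft : M := \matrix_(i < 3, j < 3) w ^+ (i * j).
Definition fourier : M := (Num.sqrt 3)^-1%:C *: dft.
Definition phase : M :=
  \matrix_(i < 3, j < 3) ((i == j)%:R * (if i == 1 :> nat then w else 1)).

Lemma dft_Xq : dft *m X = Z *m dft.
Proof. mxsolve. Qed.
Lemma dft_Zq : dft *m Z = X *m X *m dft.
Proof. mxsolve. Qed.
Lemma adj_dft_dft : adj dft *m dft = 3%:R *: 1%:M.
Proof. rewrite /Defs.adj; mxsolve. Qed.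

Lemma unitary_fourier : unitary fourier.
Proof.
rewrite /unitary /fourier adjZ -scalemxAl -scalemxAr adj_dft_dft !scalerA.
match goal with |- ?a *: _ = _ => suff -> : a = 1 by rewrite scale1r end.
have k3 : (Num.sqrt 3)^-1 * (Num.sqrt 3)^-1 = 3^-1 :> R.
  by rewrite -invfM -expr2 sqr_sqrtr ?ler0n.
by apply: complex_eq;
  rewrite /= ?(Re_mul, Im_mul, Re_conj, Im_conj, Re_nat, Im_nat) /=; lra.
Qed.

Lemma clifford_fourier : clifford fourier.
Proof.
apply: clifford_gen unitary_fourier _ _; apply: conj_to_pauliZ.
- exists 1, Z; rewrite normr1 scale1r.
  by split=> //; split; [exact: pauliZ | exact: dft_Xq].
- exists 1, (X *m X); rewrite normr1 scale1r.
  by split=> //; split; [exact: pauliM (pauliX R) (pauliX R) | exact: dft_Zq].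
Qed.

Lemma phase_Xq : phase *m X = w *: (X *m Z *m phase).
Proof. mxsolve. Qed.
Lemma phase_Zq : phase *m Z = Z *m phase.
Proof. mxsolve. Qed.
Lemma unitary_phase : unitary phase.
Proof. rewrite /unitary /Defs.adj; mxsolve. Qed.

Lemma clifford_phase : clifford phase.
Proof.
apply: clifford_gen unitary_phase _ _.
- exists w, (X *m Z); rewrite norm_omega.
  by split=> //; split; [exact: pauliM (pauliX R) (pauliZ R) | exact: phase_Xq].
- exists 1, Z; rewrite normr1 scale1r.
  by split=> //; split; [exact: pauliZ | exact: phase_Zq].
Qed.

Lemma clifford_phase_expr_fourier k : clifford (phase ^+ k *m fourier).
Proof.
apply: clifford_mul clifford_fourier; elim: k => [|k IH]; first exact: clifford1.
by rewrite exprS; apply: clifford_mul clifford_phase IH.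
Qed.

Lemma pure_stab_mulmx_ket0 U : clifford U -> pure_stab (proj (U *m ket0)).
Proof. by move=> cU; exists U. Qed.

Lemma proj_ket0 : proj ket0 = 3^-1%:C *: (1%:M + Z + Z ^+ 2).
Proof. rewrite expr2 -mulmxE /Defs.proj /Defs.ket0 /Defs.adj; mxsolve. Qed.

Lemma F_STAB_pure rho : pure_stab rho -> F_STAB rho.
Proof.
by move=> stab; exists 1%N, (fun=> 1), (fun=> rho); rewrite !big_ord1 scale1r.
Qed.

Lemma F_STAB_avg3 rho0 rho1 rho2 :
  pure_stab rho0 -> pure_stab rho1 -> pure_stab rho2 ->
  F_STAB (3^-1%:C *: (rho0 + rho1 + rho2)).
Proof.
move=> stab0 stab1 stab2; exists 3%N, (fun=> 3^-1).
exists (fun k : 'I_3 =>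
  if k == 0 :> nat then rho0 else if k == 1 :> nat then rho1 else rho2).
split; first by move=> _; rewrite invr_ge0 ler0n.
split; first by rewrite sum_ord3; lra.
split; first by case=> [[|[|[|//]]] ?].
by rewrite sum_ord3 /= !scalerDr.
Qed.

Lemma Re_expect_mix v n (p : 'I_n -> R) (rho : 'I_n -> M) :
  complex.Re (expect v (\sum_k (p k)%:C *: rho k)) =
  \sum_k p k * complex.Re (expect v (rho k)).
Proof.
rewrite expect_sum (big_morph _ Re_add (erefl : complex.Re (0 : C) = 0)).
by apply: eq_bigr => k _; rewrite expectZ Re_mul /= mul0r subr0.
Qed.

Lemma convex_comb_le n (p f : 'I_n -> R) b : (forall k, 0 <= p k) ->
  \sum_k p k = 1 -> (forall k, f k <= b) -> \sum_k p k * f k <= b.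
Proof.
move=> p_ge0 p_sum1 f_le; rewrite -[b]mul1r -p_sum1 mulr_suml.
by apply: ler_sum => k _; apply: ler_wpM2l.
Qed.

Lemma Re_expect_F_STAB_ge0 v s : F_STAB s -> 0 <= complex.Re (expect v s).
Proof.
move=> [n [p [rho [p_ge0 [_ [stab ->]]]]]]; rewrite Re_expect_mix.
apply: sumr_ge0 => k _; apply: mulr_ge0 => //.
by have [U [_ ->]] := stab k; apply: Re_expect_proj_ge0.
Qed.

(** * Overlaps with the Norrell state *)

Definition norrell_vec : 'cV[C]_3 := \col_(i < 3) (if i == 1 :> nat then 2 else -1).

(* [ev A] is [6 <N|A|N>]: the unnormalised vector keeps [Num.sqrt 6] out of
   the computations. *)
Local Notation ev := (expect norrell_vec).

Lemma expect_norrell_pauli a b : (a < 3)%N -> (b < 3)%N ->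
  ev (X ^+ a * Z ^+ b) =
  3%:R * (if b == 0%N then (if a == 0%N then 2 else -1) else w ^+ (b * a.+1)).
Proof.
case: a => [|[|[|//]]] _; case: b => [|[|[|//]]] _ /=;
  rewrite ?expr0 ?expr1 ?Xq_expr2 ?Zq_expr2 ?mulr1 ?mul1r -?mulmxE;
  rewrite /expect /norrell_vec /Defs.adj !mxE;
  do 3 (rewrite ?sum_ord3 ?big_ord1 /= ?mxE /=);
  rewrite ?omega_exprS3 ?expr0 ?exprS ?(mul0r, mulr0, add0r, addr0, mul1r, mulr1);
  csolve.
Qed.

Lemma norm_expect_norrell_pauli a b : (a < 3)%N -> (b < 3)%N ->
  (a != 0%N) || (b != 0%N) -> `|ev (X ^+ a * Z ^+ b)| = 3%:R.
Proof.
move=> a3 b3 ab; rewrite expect_norrell_pauli // normrM normr_nat.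
have [b0|b0] := eqVneq b 0%N; last by rewrite normrX norm_omega expr1n mulr1.
by move: ab; rewrite b0 /= orbF => /negPf ->; rewrite normrN normr1 mulr1.
Qed.

Lemma Re_expect_norrell_pauli_le x Q : pauli Q -> ~~ is_scalar_mx Q -> `|x| = 1 ->
  complex.Re (x * ev Q) <= 3.
Proof.
move=> /pauli_normal_form [y [a [b [y1 a3 b3 ->]]]] nsQ x1.
apply: Re_le_norm; rewrite expectZ !normrM x1 y1 !mul1r norm_expect_norrell_pauli //.
  by rewrite rmorph_nat.
apply: contraR nsQ; rewrite negb_or !negbK => /andP [/eqP -> /eqP ->].
by rewrite !expr0 mulr1 scalemx1 scalar_mx_is_scalar.
Qed.

Lemma expect_norrell_1 : ev 1%:M = 6%:R.
Proof.
rewrite /expect /norrell_vec /Defs.adj !mxE.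
by do 3 (rewrite ?sum_ord3 ?big_ord1 /= ?mxE /=); csolve.
Qed.

Lemma Re_expect_norrell_stab_le U :
  clifford U -> complex.Re (ev (proj (U *m ket0))) <= 4.
Proof.
move=> cU; have [uU _] := cU.
have pZ k : pauli (Z ^+ k).
  elim: k => [|k IH]; first exact: pauli1.
  by rewrite exprS; apply: pauliM (pauliZ R) IH.
have [x1 [Q1 [n1 p1 s1 e1]]] :=
  clifford_conj_not_scalar cU (pZ 1%N) (@Zq_expr_not_scalar 1 isT).
have [x2 [Q2 [n2 p2 s2 e2]]] :=
  clifford_conj_not_scalar cU (pZ 2%N) (@Zq_expr_not_scalar 2 isT).
have le1 := Re_expect_norrell_pauli_le p1 s1 n1.
have le2 := Re_expect_norrell_pauli_le p2 s2 n2.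
rewrite proj_mulmx proj_ket0 -scalemxAr -scalemxAl !mulmxDr !mulmxDl.
rewrite mulmx1 (unitaryC uU).
rewrite e1 e2 expectZ !expectD !expectZ expect_norrell_1.
by rewrite Re_mul 2!Re_add Re_nat /=; lra.
Qed.

Lemma Re_expect_norrell_F_STAB_le s : F_STAB s -> complex.Re (ev s) <= 4.
Proof.
move=> [n [p [rho [p_ge0 [p_sum1 [stab ->]]]]]]; rewrite Re_expect_mix.
apply: convex_comb_le => // k.
by have [U [cU ->]] := stab k; apply: Re_expect_norrell_stab_le.
Qed.

Lemma Re_expect_norrell_state_ge0 tau : state tau -> 0 <= complex.Re (ev tau).
Proof. by move=> [[_ tau_ge0] _]; apply: Re_ge0; apply: tau_ge0. Qed.

Lemma norrell_vec_norm : adj norrell_vec *m norrell_vec = 6%:R%:M.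
Proof. by rewrite [LHS]mx11_scalar -expect_norrell_1 /expect mulmx1. Qed.

Lemma norrellE : N = (6^-1 : R)%:C *: proj norrell_vec.
Proof. by rewrite /norrell /norrell_ket proj_scale exprVn sqr_sqrtr ?ler0n. Qed.

Lemma norrell_ket_unit : adj (norrell_ket R) *m norrell_ket R = 1%:M.
Proof.
rewrite /norrell_ket adjZ -scalemxAl -scalemxAr scalerA norrell_vec_norm.
rewrite scale_scalar_mx; congr (_%:M).
have k6 : (Num.sqrt 6)^-1 * (Num.sqrt 6)^-1 = 6^-1 :> R.
  by rewrite -invfM -expr2 sqr_sqrtr ?ler0n.
by apply: complex_eq;
  rewrite ?(Re_mul, Im_mul, Re_conj, Im_conj, Re_nat, Im_nat) /=; lra.
Qed.

Lemma norrell_idem : N *m N = N.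
Proof. exact: proj_idem norrell_ket_unit. Qed.

Lemma Re_mxtrace_norrell_mul A :
  complex.Re (\tr (N *m A)) = 6^-1 * complex.Re (ev A).
Proof.
by rewrite norrellE -scalemxAl mxtraceZ mxtrace_proj_mul Re_mul /= mul0r subr0.
Qed.

Lemma expect_norrell_norrell : ev N = 6%:R.
Proof.
rewrite norrellE expectZ expect_proj norrell_vec_norm mxE /= mulr1n normr_nat -natrX.
by csolve.
Qed.

Lemma expect_norrell_Xq_ket0 : ev (proj (X *m ket0)) = 4%:R.
Proof.
rewrite expect_proj (_ : (adj _ *m _) 0 0 = 2%:R) ?normr_nat -?natrX //.
rewrite /norrell_vec /Defs.ket0 /Defs.adj !mxE.
by do 2 (rewrite ?sum_ord3 ?big_ord1 /= ?mxE /=); csolve.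
Qed.

Definition phase_ket k : 'cV[C]_3 := \col_(i < 3) (if i == 1 :> nat then w ^+ k else 1).

Lemma phase_fourier_ket0 k :
  phase ^+ k *m fourier *m ket0 = (Num.sqrt 3)^-1%:C *: phase_ket k.
Proof.
elim: k => [|k IH].
  rewrite mul1mx /fourier -scalemxAl; congr (_ *: _).
  rewrite /dft /Defs.ket0 /phase_ket; mxsolve.
rewrite exprS -mulmxE -!mulmxA (mulmxA (phase ^+ k)) IH -scalemxAr; congr (_ *: _).
rewrite /phase /phase_ket; mxsolve.
Qed.

Lemma proj_phase_fourier_ket0 k :
  proj (phase ^+ k *m fourier *m ket0) = (3^-1 : R)%:C *: proj (phase_ket k).
Proof. by rewrite phase_fourier_ket0 proj_scale exprVn sqr_sqrtr ?ler0n. Qed.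

Lemma norrell_phase_decomposition :
  proj norrell_vec + proj (phase_ket 0) =
  (3 : R)%:C *: proj (X *m ket0) + proj (phase_ket 1) + proj (phase_ket 2).
Proof. rewrite /Defs.proj /Defs.ket0 /Defs.adj /norrell_vec /phase_ket; mxsolve. Qed.

Lemma norrell_fourier_mix :
  (1 + 2^-1 : R)^-1%:C *: (N + (2^-1 : R)%:C *: proj (fourier *m ket0)) =
  (3^-1 : R)%:C *: (proj (X *m ket0) + proj (phase *m fourier *m ket0)
                    + proj (phase ^+ 2 *m fourier *m ket0)).
Proof.
have -> : (1 + 2^-1 : R)^-1 = 2 / 3 by rewrite (_ : 1 + 2^-1 = 3 / 2) ?invf_div //; lra.
have -> : proj (fourier *m ket0) = (3^-1 : R)%:C *: proj (phase_ket 0).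
  by rewrite -(proj_phase_fourier_ket0 0) mul1mx.
rewrite -[phase *m _]/(phase ^+ 1 *m _) !proj_phase_fourier_ket0 norrellE.
transitivity ((9^-1 : R)%:C *: (proj norrell_vec + proj (phase_ket 0))).
  rewrite !scalerDr !scalerA -!rmorphM.
  have -> : 2 / 3 / 6 = 9^-1 :> R by lra.
  by have -> : 2 / 3 / 2 / 3 = 9^-1 :> R by lra.
rewrite norrell_phase_decomposition !scalerDr !scalerA -!rmorphM.
have -> : 9^-1 * 3 = 3^-1 :> R by lra.
by have -> : 3^-1 / 3 = 9^-1 :> R by lra.
Qed.

Lemma F_STAB_norrell_fourier_mix :
  F_STAB ((1 + 2^-1 : R)^-1%:C *: (N + (2^-1 : R)%:C *: proj (fourier *m ket0))).
Proof.
rewrite norrell_fourier_mix; apply: F_STAB_avg3; apply: pure_stab_mulmx_ket0.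
- exact: clifford_Xq.
- exact: (clifford_phase_expr_fourier 1).
- exact: (clifford_phase_expr_fourier 2).
Qed.

Lemma state_fourier_ket0 : state (proj (fourier *m ket0)).
Proof.
split.
  by split=> [|v]; [exact: adj_proj | rewrite -/(expect v _) expect_proj exprn_ge0].
rewrite /Defs.proj mxtrace_mulC trace_mx11 adjM mulmxA -(mulmxA _ _ fourier).
by rewrite unitary_fourier mulmx1 /Defs.ket0 /Defs.adj !mxE sum_ord3 !mxE /=; csolve.
Qed.

(** * The three monotones *)

Lemma ler_log2 (x y : R) : 0 < x -> x <= y -> log2 x <= log2 y.
Proof.
move=> x_gt0 xy; apply: ler_wpM2r; first by rewrite invr_ge0 ltW // ln_gt0 // ltr1n.
by rewrite ler_ln ?posrE // (lt_le_trans x_gt0 xy).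
Qed.

Lemma log2V (x : R) : 0 < x -> log2 x^-1 = - log2 x.
Proof. by move=> x_gt0; rewrite /log2 lnV ?posrE // mulNr. Qed.

Lemma mlog2_le (t u : R) : 0 < u -> t <= u -> (mlog2 u <= mlog2 t)%E.
Proof.
move=> u_gt0 tu; rewrite /mlog2 u_gt0; case: ifP => [t_gt0|_]; last exact: leey.
by rewrite lee_fin lerN2 ler_log2.
Qed.

Lemma mlog2_two_thirds : mlog2 (2 / 3) = (log2 (3 / 2 : R))%:E.
Proof.
have two_thirds_gt0 : (0 : R) < 2 / 3 by lra.
by rewrite /mlog2 two_thirds_gt0 -log2V // invf_div.
Qed.

Lemma norrell_mix_ge s tau : 0 <= s -> 0 <= complex.Re (ev tau) ->
  F_STAB ((1 + s)^-1%:C *: (N + s%:C *: tau)) -> log2 (3 / 2) <= log2 (1 + s).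
Proof.
move=> s_ge0 tau_ge0 /Re_expect_norrell_F_STAB_le.
rewrite expectZ expectD expectZ expect_norrell_norrell Re_mul Re_add Re_nat Re_mul /=.
set r := complex.Re (ev tau) => le4.
apply: ler_log2; first by lra.
have s1_gt0 : 0 < 1 + s by lra.
have := mulfV (lt0r_neq0 s1_gt0); have : 0 < (1 + s)^-1 by rewrite invr_gt0.
have : 0 <= s * r by apply: mulr_ge0.
nra.
Qed.

Lemma Dmin_norrell : Dmin F_STAB N = (log2 (3 / 2 : R))%:E.
Proof.
have [N_idem N_adj] := (norrell_idem, adj_proj (norrell_ket R)).
apply/eqP; rewrite eq_le; apply/andP; split.
  apply: ereal_inf_lbound; exists (proj (X *m ket0)), N.
  split; first exact/F_STAB_pure/pure_stab_mulmx_ket0/clifford_Xq.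
  split; first exact: supp_proj_refl.
  rewrite Re_mxtrace_norrell_mul expect_norrell_Xq_ket0 Re_nat -mlog2_two_thirds.
  by congr mlog2; lra.
apply/ereal_infP => _ [sigma [P [Fsigma [/supp_proj_eq -> // ->]]]].
rewrite -mlog2_two_thirds; apply: mlog2_le; first lra.
by rewrite Re_mxtrace_norrell_mul; have := Re_expect_norrell_F_STAB_le Fsigma; lra.
Qed.

Lemma Dmax_norrell : Dmax F_STAB N = (log2 (3 / 2 : R))%:E.
Proof.
apply/eqP; rewrite eq_le; apply/andP; split.
  apply: ereal_inf_lbound; exists 2^-1, (proj (fourier *m ket0)).
  split; first by rewrite invr_ge0 ler0n.
  split; first exact: state_fourier_ket0.
  split; first exact: F_STAB_norrell_fourier_mix.
  by congr ((log2 _)%:E); lra.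
apply/ereal_infP => _ [s [tau [s_ge0 [tau_state [Fmix ->]]]]].
rewrite lee_fin; apply: norrell_mix_ge Fmix => //.
exact: Re_expect_norrell_state_ge0.
Qed.

Lemma Ds_norrell : Ds F_STAB N = (log2 (3 / 2 : R))%:E.
Proof.
apply/eqP; rewrite eq_le; apply/andP; split.
  apply: ereal_inf_lbound; exists 2^-1, (proj (fourier *m ket0)).
  split; first by rewrite invr_ge0 ler0n.
  split; first exact/F_STAB_pure/pure_stab_mulmx_ket0/clifford_fourier.
  split; first exact: F_STAB_norrell_fourier_mix.
  by congr ((log2 _)%:E); lra.
apply/ereal_infP => _ [s [tau [s_ge0 [Ftau [Fmix ->]]]]].
by rewrite lee_fin; apply: norrell_mix_ge Fmix => //; apply: Re_expect_F_STAB_ge0.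
Qed.

End Norrell.

Theorem proposition8 (R : realType) :
  Dmin (@F_STAB R) (norrell R) = (log2 (3 / 2 : R))%:E /\
  Dmax (@F_STAB R) (norrell R) = (log2 (3 / 2 : R))%:E /\
  Ds (@F_STAB R) (norrell R) = (log2 (3 / 2 : R))%:E.
Proof.
by split; [exact: Dmin_norrell | split; [exact: Dmax_norrell | exact: Ds_norrell]].
Qed.
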